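(* For $d\in[0,D]$ with $Ld<f_BT$, let $X(d)$ be the optimal value of \[ \min_{P,\{\beta_n\}}\ P+\sum_{n=1}^N\beta_n^2(Ph_n+\sigma^2W) \] subject to \[ \frac{P\left(\sum_{n=1}^N\sqrt{h_ng_n}\,\beta_n\right)^2}{\sigma^2W\left(1+\sum_{n=1}^N g_n\beta_n^2\right)}\ge e^{\frac{2d}{W(T-Ld/f_B)}}-1,\qquad P\ge0,\quad \beta_n\ge0\ \ \forall n. \] Then $X(d)$ is a monotonically increasing function of $d$.
   Context: All parameters $N, h_n, g_n, W, \sigma^2, L, D, T, f_B$ are given positive constants, and $n$ ranges over $\{1,\dots,N\}$. *)

From Stdlib Require Import Reals.
From Coquelicot Require Import Coquelicot.
Open Scope R_scope.

(* Feasibility of (P, beta) for the problem with distortion parameter d.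
   beta is indexed 1..N (values outside are irrelevant). *)
Definition feasible (N : nat) (h g : nat -> R) (W sigma2 L T fB : R)
  (d P : R) (beta : nat -> R) : Prop :=
  0 <= P /\ (forall n, (1 <= n <= N)%nat -> 0 <= beta n) /\
  P * (sum_n_m (fun n => sqrt (h n * g n) * beta n) 1 N) ^ 2
    / (sigma2 * W * (1 + sum_n_m (fun n => g n * beta n ^ 2) 1 N))
  >= exp (2 * d / (W * (T - L * d / fB))) - 1.

Definition objective (N : nat) (h : nat -> R) (W sigma2 : R)
  (P : R) (beta : nat -> R) : R :=
  P + sum_n_m (fun n => beta n ^ 2 * (P * h n + sigma2 * W)) 1 N.

Definition X (N : nat) (h g : nat -> R) (W sigma2 L T fB : R) (d : R) : Rbar :=
  Glb_Rbar (fun x => exists P beta,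
    feasible N h g W sigma2 L T fB d P beta /\ x = objective N h W sigma2 P beta).

(* Scaling the power of a point feasible for the larger distortion d2 by
   t = gamma(d1)/gamma(d2) < 1, where gamma(d) is the right-hand side of the SNR
   constraint, gives a point feasible for d1, since the SNR is linear in P.  The
   objective drops by at least (1 - t) P, and P is bounded below on the feasible
   set for d2: by Cauchy-Schwarz the SNR is at most P (sum h_n) / (sigma^2 W).
   Hence X(d1) + (1 - t) gamma(d2) sigma^2 W / (sum h_n) <= X(d2). *)

From Stdlib Require Import Reals Lra Lia.
From Coquelicot Require Import Coquelicot.
Open Scope R_scope.

Lemma sum_n_m_le_loc (a b : nat -> R) (n m : nat) :
  (forall k, (n <= k <= m)%nat -> a k <= b k) -> sum_n_m a n m <= sum_n_m b n m.
Proof.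
  intros Hab.
  rewrite (sum_n_m_ext_loc a (fun k => Rmin (a k) (b k))).
  - apply sum_n_m_le. intros k. apply Rmin_r.
  - intros k Hk. symmetry. apply Rmin_left. now apply Hab.
Qed.

Lemma sum_n_m_nonneg (a : nat -> R) (n m : nat) :
  (forall k, (n <= k <= m)%nat -> 0 <= a k) -> 0 <= sum_n_m a n m.
Proof.
  intros Ha. replace 0 with (sum_n_m (fun _ => 0) n m)
    by exact (sum_n_m_const_zero (G := R_AbelianMonoid) n m).
  now apply sum_n_m_le_loc.
Qed.

Lemma sum_n_m_pos (a : nat -> R) (n m : nat) :
  (n <= m)%nat -> (forall k, (n <= k <= m)%nat -> 0 < a k) -> 0 < sum_n_m a n m.
Proof.
  intros Hnm Ha. rewrite sum_Sn_m by exact Hnm.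
  apply Rplus_lt_le_0_compat.
  - apply Ha. lia.
  - apply sum_n_m_nonneg. intros k Hk. apply Rlt_le, Ha. lia.
Qed.

Lemma sum_n_m_sqr_sub (a b : nat -> R) (x : R) (n m : nat) :
  sum_n_m (fun k => (a k - x * b k) ^ 2) n m =
  sum_n_m (fun k => a k ^ 2) n m - 2 * x * sum_n_m (fun k => a k * b k) n m
  + x ^ 2 * sum_n_m (fun k => b k ^ 2) n m.
Proof.
  rewrite (sum_n_m_ext _ (fun k => plus (plus (a k ^ 2) (mult (- 2 * x) (a k * b k)))
                                        (mult (x ^ 2) (b k ^ 2)))).
  - rewrite !sum_n_m_plus, !(sum_n_m_mult_l (K := R_Ring)). unfold plus, mult. simpl.
    (* [sum_n_m_mult_l] sums over the additive monoid of [R_Ring], which is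
       only convertible to [R_AbelianMonoid]; [ring] needs them syntactically equal *)
    change (Ring.AbelianMonoid R_Ring) with R_AbelianMonoid. ring.
  - intros k. unfold plus, mult. simpl. ring.
Qed.

Lemma quadratic_nonneg_discriminant (A S B : R) :
  0 <= B -> (forall x, 0 <= A - 2 * x * S + x ^ 2 * B) -> S ^ 2 <= A * B.
Proof.
  intros [HB | <-] Hq.
  - specialize (Hq (S / B)).
    replace (A - 2 * (S / B) * S + (S / B) ^ 2 * B) with ((A * B - S ^ 2) / B)
      in Hq by (field; lra).
    assert (0 <= A * B - S ^ 2); [| lra].
    replace (A * B - S ^ 2) with ((A * B - S ^ 2) / B * B) by (field; lra).
    now apply Rmult_le_pos; [| apply Rlt_le].
  - destruct (Req_dec S 0) as [-> | HS]; [lra |].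
    (* a nonconstant affine function of x takes negative values *)
    specialize (Hq ((A + 1) / (2 * S))).
    replace (A - 2 * ((A + 1) / (2 * S)) * S + ((A + 1) / (2 * S)) ^ 2 * 0) with (-1)
      in Hq by (field; exact HS).
    lra.
Qed.

Lemma sum_n_m_Cauchy_Schwarz (a b : nat -> R) (n m : nat) :
  (sum_n_m (fun k => a k * b k) n m) ^ 2 <=
  sum_n_m (fun k => a k ^ 2) n m * sum_n_m (fun k => b k ^ 2) n m.
Proof.
  apply quadratic_nonneg_discriminant.
  - apply sum_n_m_nonneg. intros. apply pow2_ge_0.
  - intros x. rewrite <- sum_n_m_sqr_sub.
    apply sum_n_m_nonneg. intros. apply pow2_ge_0.
Qed.

Lemma Glb_Rbar_lt_of_gap (E1 E2 : R -> Prop) (m delta : R) :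
  (exists x, E1 x) -> (forall x, E1 x -> m <= x) -> 0 < delta ->
  (forall x, E2 x -> exists y, E1 y /\ y + delta <= x) ->
  Rbar_lt (Glb_Rbar E1) (Glb_Rbar E2).
Proof.
  intros [x1 Hx1] Hm Hdelta Hgap.
  destruct (Glb_Rbar_correct E1) as [Hlb Hglb].
  destruct (Glb_Rbar E1) as [r | |].
  - apply Rbar_lt_le_trans with (r + delta); [simpl; lra |].
    apply Glb_Rbar_correct. intros x Hx.
    destruct (Hgap x Hx) as (y & Hy & Hyx).
    specialize (Hlb y Hy). simpl in *. lra.
  - exfalso. exact (Hlb x1 Hx1).
  - exfalso. apply (Hglb m). intros x Hx. exact (Hm x Hx).
Qed.

Section Power_allocation.

Variables (N : nat) (h g : nat -> R) (W sigma2 L T fB : R).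
Hypothesis HN : (1 <= N)%nat.
Hypothesis Hh : forall n, (1 <= n <= N)%nat -> 0 < h n.
Hypothesis Hg : forall n, (1 <= n <= N)%nat -> 0 < g n.
Hypotheses (HW : 0 < W) (Hs : 0 < sigma2) (HT : 0 < T) (HfB : 0 < fB).

Definition snr_target (d : R) : R := exp (2 * d / (W * (T - L * d / fB))) - 1.

Definition snr (P : R) (beta : nat -> R) : R :=
  P * (sum_n_m (fun n => sqrt (h n * g n) * beta n) 1 N) ^ 2
    / (sigma2 * W * (1 + sum_n_m (fun n => g n * beta n ^ 2) 1 N)).

Lemma feasibleE (d P : R) (beta : nat -> R) :
  feasible N h g W sigma2 L T fB d P beta =
  (0 <= P /\ (forall n, (1 <= n <= N)%nat -> 0 <= beta n) /\
   snr P beta >= snr_target d).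
Proof. reflexivity. Qed.

Lemma snr_target_exponent (d : R) :
  L * d < fB * T ->
  2 * d / (W * (T - L * d / fB)) = 2 * fB / W * (d / (fB * T - L * d)).
Proof.
  intros Hd. field. repeat split; lra.
Qed.

Lemma snr_target_nonneg (d : R) : 0 <= d -> L * d < fB * T -> 0 <= snr_target d.
Proof.
  intros Hd0 Hd. unfold snr_target. rewrite snr_target_exponent by exact Hd.
  assert (0 <= 2 * fB / W * (d / (fB * T - L * d))).
  { apply Rmult_le_pos; apply Rmult_le_pos; try lra;
      apply Rlt_le, Rinv_0_lt_compat; lra. }
  pose proof (exp_ineq1_le (2 * fB / W * (d / (fB * T - L * d)))). lra.
Qed.

Lemma snr_target_lt (d1 d2 : R) :
  d1 < d2 -> L * d1 < fB * T -> L * d2 < fB * T -> snr_target d1 < snr_target d2.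
Proof.
  intros Hd12 Hd1 Hd2. unfold snr_target.
  rewrite !snr_target_exponent by assumption.
  apply Rplus_lt_compat_r, exp_increasing, Rmult_lt_compat_l.
  - apply Rdiv_lt_0_compat; lra.
  - apply Rlt_0_minus.
    replace (d2 / (fB * T - L * d2) - d1 / (fB * T - L * d1))
      with (fB * T * (d2 - d1) / ((fB * T - L * d1) * (fB * T - L * d2)))
      by (field; lra).
    apply Rdiv_lt_0_compat; apply Rmult_lt_0_compat; nra.
Qed.

Lemma snr_scale (t P : R) (beta : nat -> R) : snr (t * P) beta = t * snr P beta.
Proof. unfold snr, Rdiv. ring. Qed.

Lemma sum_sqrt_hg_sqr_le (beta : nat -> R) :
  (sum_n_m (fun n => sqrt (h n * g n) * beta n) 1 N) ^ 2 <=
  sum_n_m h 1 N * sum_n_m (fun n => g n * beta n ^ 2) 1 N.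
Proof.
  pose proof (sum_n_m_Cauchy_Schwarz (fun n => sqrt (h n)) (fun n => sqrt (g n) * beta n) 1 N)
    as CS.
  rewrite (sum_n_m_ext_loc (fun n => sqrt (h n * g n) * beta n)
             (fun n => sqrt (h n) * (sqrt (g n) * beta n))),
          (sum_n_m_ext_loc h (fun n => sqrt (h n) ^ 2)),
          (sum_n_m_ext_loc (fun n => g n * beta n ^ 2) (fun n => (sqrt (g n) * beta n) ^ 2)).
  - exact CS.
  - intros n Hn. rewrite Rpow_mult_distr, pow2_sqrt; [reflexivity | apply Rlt_le, Hg, Hn].
  - intros n Hn. rewrite pow2_sqrt; [reflexivity | apply Rlt_le, Hh, Hn].
  - intros n Hn. rewrite sqrt_mult by (apply Rlt_le; auto). apply Rmult_assoc.
Qed.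

Lemma snr_le (P : R) (beta : nat -> R) :
  0 <= P -> snr P beta <= P * sum_n_m h 1 N / (sigma2 * W).
Proof.
  intros HP. unfold snr.
  pose proof (sum_sqrt_hg_sqr_le beta) as CS.
  set (S := sum_n_m (fun n => sqrt (h n * g n) * beta n) 1 N) in *.
  set (G := sum_n_m (fun n => g n * beta n ^ 2) 1 N) in *.
  set (H := sum_n_m h 1 N) in *.
  assert (HG : 0 <= G).
  { apply sum_n_m_nonneg. intros n Hn. apply Rmult_le_pos.
    - apply Rlt_le, Hg, Hn.
    - apply pow2_ge_0. }
  assert (HH : 0 <= H) by (apply sum_n_m_nonneg; intros n Hn; apply Rlt_le, Hh, Hn).
  assert (HS : S ^ 2 <= H * (1 + G)) by (rewrite Rmult_plus_distr_l, Rmult_1_r; lra).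
  enough (0 <= P * H / (sigma2 * W) - P * S ^ 2 / (sigma2 * W * (1 + G))) by lra.
  replace (P * H / (sigma2 * W) - P * S ^ 2 / (sigma2 * W * (1 + G)))
    with (P * (H * (1 + G) - S ^ 2) / (sigma2 * W * (1 + G))) by (field; lra).
  apply Rdiv_le_0_compat.
  - apply Rmult_le_pos; lra.
  - apply Rmult_lt_0_compat; [apply Rmult_lt_0_compat |]; lra.
Qed.

Lemma feasible_power_ge (d P : R) (beta : nat -> R) :
  feasible N h g W sigma2 L T fB d P beta ->
  snr_target d * (sigma2 * W) / sum_n_m h 1 N <= P.
Proof.
  rewrite feasibleE. intros (HP & _ & Hsnr).
  assert (HH : 0 < sum_n_m h 1 N) by (apply sum_n_m_pos; assumption).
  assert (Hle : snr_target d <= P * sum_n_m h 1 N / (sigma2 * W))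
    by (pose proof (snr_le P beta HP); lra).
  apply Rle_div_l; [exact HH |].
  replace (P * sum_n_m h 1 N) with (P * sum_n_m h 1 N / (sigma2 * W) * (sigma2 * W))
    by (field; lra).
  apply Rmult_le_compat_r; [apply Rmult_le_pos; lra | exact Hle].
Qed.

Lemma feasible_scale (d d' t P : R) (beta : nat -> R) :
  0 <= t -> snr_target d' <= t * snr_target d ->
  feasible N h g W sigma2 L T fB d P beta ->
  feasible N h g W sigma2 L T fB d' (t * P) beta.
Proof.
  intros Ht Hd'. rewrite !feasibleE. intros (HP & Hbeta & Hsnr).
  split; [apply Rmult_le_pos; assumption | split; [exact Hbeta |]].
  rewrite snr_scale. apply Rle_ge, (Rle_trans _ _ _ Hd'), Rmult_le_compat_l;
    [exact Ht | apply Rge_le, Hsnr].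
Qed.

Lemma feasible_unit_beta (d : R) :
  0 <= snr_target d -> exists P, feasible N h g W sigma2 L T fB d P (fun _ => 1).
Proof.
  intros Hd.
  set (S := sum_n_m (fun n => sqrt (h n * g n) * 1) 1 N).
  set (G := sum_n_m (fun n => g n * 1 ^ 2) 1 N).
  assert (HS : 0 < S).
  { apply sum_n_m_pos; [exact HN |]. intros n Hn.
    rewrite Rmult_1_r. apply sqrt_lt_R0, Rmult_lt_0_compat; auto. }
  assert (HG : 0 <= G).
  { apply sum_n_m_nonneg. intros n Hn. rewrite pow1, Rmult_1_r. apply Rlt_le, Hg, Hn. }
  exists (snr_target d * (sigma2 * W * (1 + G)) / S ^ 2).
  rewrite feasibleE. split; [| split].
  - apply Rmult_le_pos.
    + apply Rmult_le_pos; [exact Hd |].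
      apply Rmult_le_pos; [apply Rmult_le_pos |]; lra.
    + apply Rlt_le, Rinv_0_lt_compat, pow_lt, HS.
  - intros. lra.
  - apply Req_ge. unfold snr. fold S G. field. lra.
Qed.

Lemma objective_nonneg (P : R) (beta : nat -> R) :
  0 <= P -> 0 <= objective N h W sigma2 P beta.
Proof.
  intros HP. unfold objective. apply Rplus_le_le_0_compat; [exact HP |].
  apply sum_n_m_nonneg. intros n Hn. apply Rmult_le_pos; [apply pow2_ge_0 |].
  pose proof (Hh n Hn). apply Rplus_le_le_0_compat; apply Rmult_le_pos; lra.
Qed.

Lemma objective_scale (t P : R) (beta : nat -> R) :
  t <= 1 -> 0 <= P ->
  objective N h W sigma2 (t * P) beta + (1 - t) * P <= objective N h W sigma2 P beta.
Proof.
  intros Ht HP. unfold objective.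
  enough (sum_n_m (fun n => beta n ^ 2 * (t * P * h n + sigma2 * W)) 1 N <=
          sum_n_m (fun n => beta n ^ 2 * (P * h n + sigma2 * W)) 1 N) by lra.
  apply sum_n_m_le_loc. intros n Hn.
  apply Rmult_le_compat_l; [apply pow2_ge_0 |].
  pose proof (Hh n Hn). assert (0 <= (1 - t) * P * h n) by (apply Rmult_le_pos; nra).
  nra.
Qed.

End Power_allocation.

Theorem lemma9 (N : nat) (h g : nat -> R) (W sigma2 L D T fB : R)
  (HN : (1 <= N)%nat)
  (Hh : forall n, (1 <= n <= N)%nat -> 0 < h n)
  (Hg : forall n, (1 <= n <= N)%nat -> 0 < g n)
  (HW : 0 < W) (Hs : 0 < sigma2) (HL : 0 < L) (HD : 0 < D)
  (HT : 0 < T) (HfB : 0 < fB) :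
  forall d1 d2 : R,
    0 <= d1 <= D -> 0 <= d2 <= D ->
    L * d1 < fB * T -> L * d2 < fB * T ->
    d1 < d2 ->
    Rbar_lt (X N h g W sigma2 L T fB d1) (X N h g W sigma2 L T fB d2).
Proof.
  intros d1 d2 [Hd1 _] _ HLd1 HLd2 Hd12.
  set (gamma := snr_target W L T fB).
  assert (Hgamma1 : 0 <= gamma d1) by (apply snr_target_nonneg; assumption).
  assert (Hgamma12 : gamma d1 < gamma d2) by (apply snr_target_lt; assumption).
  set (t := gamma d1 / gamma d2).
  assert (Ht : 0 <= t < 1).
  { unfold t. split; [apply Rdiv_le_0_compat | apply (Rdiv_lt_1 (gamma d1) (gamma d2))]; lra. }
  set (Pmin := gamma d2 * (sigma2 * W) / sum_n_m h 1 N).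
  assert (HPmin : 0 < Pmin).
  { apply Rdiv_lt_0_compat; [repeat apply Rmult_lt_0_compat; lra |].
    apply sum_n_m_pos; assumption. }
  apply Glb_Rbar_lt_of_gap with (m := 0) (delta := (1 - t) * Pmin).
  - destruct (feasible_unit_beta N h g W sigma2 L T fB HN Hh Hg HW Hs d1 Hgamma1) as [P HP].
    eexists _, P, _. split; [exact HP | reflexivity].
  - intros x (P & beta & [HP _] & ->). apply objective_nonneg; assumption.
  - apply Rmult_lt_0_compat; lra.
  - intros x (P & beta & Hf & ->). exists (objective N h W sigma2 (t * P) beta). split.
    + exists (t * P), beta. split; [| reflexivity].
      apply (feasible_scale _ _ _ _ _ _ _ _ d2); [lra | | exact Hf].
      unfold t. fold gamma. right. field. lra.
    + assert (HPmin_le : Pmin <= P)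
        by exact (feasible_power_ge N h g W sigma2 L T fB HN Hh Hg HW Hs d2 P beta Hf).
      destruct Hf as [HP _].
      pose proof (objective_scale N h W sigma2 Hh t P beta ltac:(lra) HP).
      apply (Rmult_le_compat_l (1 - t)) in HPmin_le; lra.
Qed.
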